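(* Let $(E,\tau)$ be a locally solid vector lattice, where $\tau$ is an o-Lebesgue topology. The following are equivalent: (1) $C_\tau=E$; (2) $E$ has the countable sup property; (3) every $\tau$-convergent net in $E$ has an embedded sequence that is uo-convergent to the same limit; (4) every increasing $\tau$-convergent net in $E^+$ has an embedded sequence that is uo-convergent to the same limit.
   Context: All vector lattices are real and Archimedean; linear topologies are Hausdorff. A locally solid topology on a vector lattice is a linear topology such that zero has a neighbourhood basis of solid sets. A net $(x_\alpha)$ order converges to $x$ if there is a net $y_\beta\downarrow0$ such that for each $\beta_0$ eventually $|x_\alpha-x|\leq y_{\beta_0}$; it uo-converges to $x$ if $|x_\alpha-x|\wedge|y|$ order converges to $0$ for every $y\in E$. An o-Lebesgue topology is a locally solid topology in which every order convergent net converges topologically to the same limit. A sequence $(V_n)$ of neighbourhoods of zero is normal if $V_{n+1}+V_{n+1}\subseteq V_n$; the carrier $C_\tau$ is the union of the disjoint complements $N^{\mathrm d}$ where $N=\bigcap_nV_n$ ranges over intersections of normal sequences of solid $\tau$-neighbourhoods of zero. $E$ has the countable sup property if every subset with a supremum contains an at most countable subset with the same supremum. Embedded sequence: given a net $(x_\alpha)_{\alpha\in A}$, a sequence $(x_{\alpha_n})_{n\geq1}$ with $\alpha_1\leq\alpha_2\leq\dotsb$, strictly increasing when $A$ has no largest element. *)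

From HB Require Import structures.
From mathcomp Require Import all_boot all_order all_algebra.
From mathcomp Require Import all_classical all_reals all_analysis.
Set Implicit Arguments. Unset Strict Implicit. Unset Printing Implicit Defensive.
Import Order.TTheory GRing.Theory Num.Theory.
Local Open Scope classical_set_scope.
Local Open Scope ring_scope.

Record vector_lattice (R : realType) (E : lmodType R) := VectorLattice {
  vle : E -> E -> Prop;
  vle_refl : forall x, vle x x;
  vle_trans : forall x y z, vle x y -> vle y z -> vle x z;
  vle_anti : forall x y, vle x y -> vle y x -> x = y;
  vle_add : forall x y z, vle x y -> vle (x + z) (y + z);
  vle_scale : forall (a : R) x y, 0 <= a -> vle x y -> vle (a *: x) (a *: y);
  vsup : E -> E -> E;
  vsup_ub1 : forall x y, vle x (vsup x y);
  vsup_ub2 : forall x y, vle y (vsup x y);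
  vsup_least : forall x y z, vle x z -> vle y z -> vle (vsup x y) z
}.

Section VL.
Context {R : realType} {E : lmodType R} (L : vector_lattice E).

Definition vinf (x y : E) : E := - vsup L (- x) (- y).
Definition vabs (x : E) : E := vsup L x (- x).

Definition archimedean_vl : Prop :=
  forall x y : E, (forall n : nat, vle L (x *+ n) y) -> vle L x 0.

Definition is_sup (S : set E) (s : E) : Prop :=
  (forall x, S x -> vle L x s) /\ (forall z, (forall x, S x -> vle L x z) -> vle L s z).
Definition is_inf (S : set E) (s : E) : Prop :=
  (forall x, S x -> vle L s x) /\ (forall z, (forall x, S x -> vle L z x) -> vle L z s).

Definition solid (A : set E) : Prop :=
  forall x y, A x -> vle L (vabs y) (vabs x) -> A y.

Definition countable_sup_property : Prop :=
  forall (S : set E) (s : E), is_sup S s ->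
    exists C : set E, C `<=` S /\ countable C /\ is_sup C s.

Definition dcompl (N : set E) : set E :=
  [set x | forall y, N y -> vinf (vabs x) (vabs y) = 0].
End VL.

Record dirset (I : Type) := DirSet {
  dle : I -> I -> Prop;
  dle_refl : forall a, dle a a;
  dle_trans : forall a b c, dle a b -> dle b c -> dle a c;
  dle_dir : forall a b, exists c, dle a c /\ dle b c;
  dle_inh : inhabited I
}.

Definition dlt (I : Type) (D : dirset I) (a b : I) : Prop :=
  dle D a b /\ ~ dle D b a.

Lemma nat_dir_refl (a : nat) : (a <= a)%N. Proof. exact: leqnn. Qed.
Lemma nat_dir_trans (a b c : nat) : (a <= b)%N -> (b <= c)%N -> (a <= c)%N.
Proof. exact: leq_trans. Qed.
Lemma nat_dir_dir (a b : nat) : exists c, (a <= c)%N /\ (b <= c)%N.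
Proof. by exists (maxn a b); rewrite leq_maxl leq_maxr. Qed.

Definition natD : dirset nat :=
  @DirSet nat (fun a b => (a <= b)%N) nat_dir_refl nat_dir_trans nat_dir_dir
    (inhabits 0%N).

Section Conv.
Context {R : realType} {E : topologicalLmodType R} (L : vector_lattice E).

Definition tconv (I : Type) (D : dirset I) (x : I -> E) (l : E) : Prop :=
  forall U, nbhs l U -> exists a0, forall a, dle D a0 a -> U (x a).

Definition decr_to0 (J : Type) (DJ : dirset J) (y : J -> E) : Prop :=
  (forall b b', dle DJ b b' -> vle L (y b') (y b)) /\ is_inf L (range y) 0.

Definition oconv (I : Type) (D : dirset I) (x : I -> E) (l : E) : Prop :=
  exists (J : Type) (DJ : dirset J) (y : J -> E), decr_to0 DJ y /\
    forall b0, exists a0, forall a, dle D a0 a -> vle L (vabs L (x a - l)) (y b0).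

Definition uoconv (I : Type) (D : dirset I) (x : I -> E) (l : E) : Prop :=
  forall w : E, oconv D (fun a => vinf L (vabs L (x a - l)) (vabs L w)) 0.

Definition locally_solid : Prop :=
  forall U, nbhs (0 : E) U -> exists V, nbhs (0 : E) V /\ solid L V /\ V `<=` U.

Definition o_lebesgue : Prop :=
  locally_solid /\
  forall (I : Type) (D : dirset I) (x : I -> E) (l : E), oconv D x l -> tconv D x l.

Definition normal_solid_seq (V : nat -> set E) : Prop :=
  forall n, nbhs (0 : E) (V n) /\ solid L (V n) /\
    (forall a b, V n.+1 a -> V n.+1 b -> V n (a + b)).

Definition carrier : set E :=
  [set x | exists V, normal_solid_seq V /\ dcompl L (\bigcap_n V n) x].

Definition embedded_indices (I : Type) (D : dirset I) (alpha : nat -> I) : Prop :=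
  (forall n, dle D (alpha n) (alpha n.+1)) /\
  ((~ exists m, forall b, dle D b m) -> forall n, dlt D (alpha n) (alpha n.+1)).

Definition increasing_pos_net (I : Type) (D : dirset I) (x : I -> E) : Prop :=
  (forall a, vle L 0 (x a)) /\ (forall a b, dle D a b -> vle L (x a) (x b)).
End Conv.

(* (1) => (3): every [x_a - l] of a net converging to [l] lies in the carrier, i.e. is
   disjoint from the kernel of some normal sequence.  Choose the indices [alpha n]
   recursively so that the tail of the net beyond [alpha n.+1] lies in the [n.+1]-st
   term of the meet [W] of the normal sequences attached to the terms already chosen.
   Then [z_n := |x_(alpha n) - l| /\ |w|] lies in [W n] and is disjoint from the kernel
   of [W].  An element [p >= 0] below every eventual upper bound of [(z_n)] lies in that
   kernel (tails of the series of the [z_n] stay in [W n.+1], and the o-Lebesgue property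
   absorbs [(p - tail)^+]), so [p] is disjoint from all [z_n], and the Archimedean
   property forces [p = 0]: [z_n] order converges to [0].
   (3) => (4) is trivial.
   (4) => (2): the finite suprema of a set increase and order converge to its supremum,
   so they converge topologically; the countably many elements of the set involved in
   a uo-convergent embedded sequence already have the same supremum.
   (2) => (1): the kernel [N] of a normal sequence is a band, because an element
   [q >= 0] disjoint from [N^d] is the supremum of [N] in [[0, q]], hence a topological
   limit of elements of [N].  So an element disjoint from the whole carrier is in every
   neighbourhood of [0], and [|x|] is the supremum of the carrier in [[0, |x|]]; a
   countable part with the same supremum is disjoint from the kernel of one diagonal
   normal sequence, and then so is [|x|]. *)

From HB Require Import structures.
From mathcomp Require Import all_boot all_order all_algebra.
From mathcomp Require Import all_classical all_reals all_analysis.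
Import Order.TTheory GRing.Theory Num.Theory.
Local Open Scope classical_set_scope.
Local Open Scope ring_scope.

Set Implicit Arguments.
Unset Strict Implicit.

Section VectorLatticeAlgebra.
Context {R : realType} {E : lmodType R} {L : vector_lattice E}.
Local Notation "x <=: y" := (vle L x y) (at level 70).
Local Notation sup := (vsup L).
Local Notation inf := (vinf L).
Local Notation abs := (vabs L).
Implicit Types x y z t : E.

Lemma vleD2l x y z : x <=: y -> z + x <=: z + y.
Proof. by rewrite ![z + _]addrC; apply: vle_add. Qed.

Lemma vleD x y z t : x <=: y -> z <=: t -> x + z <=: y + t.
Proof. by move=> /(vle_add z) h /(vleD2l y); apply: vle_trans. Qed.

Lemma vleN2 x y : x <=: y -> - y <=: - x.
Proof.
move=> /(vle_add (- x - y)).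
by rewrite addrA subrr add0r addrCA subrr addr0.
Qed.

Lemma vleBrDr x y z : x <=: y - z <-> x + z <=: y.
Proof.
by split=> [/(vle_add z)|/(vle_add (- z))]; rewrite ?subrK ?addrK.
Qed.

Lemma vleBlDr x y z : x - z <=: y <-> x <=: y + z.
Proof.
by split=> [/(vle_add z)|/(vle_add (- z))]; rewrite ?subrK ?addrK.
Qed.

Lemma vsubr_ge0 x y : 0 <=: y - x <-> x <=: y.
Proof. by rewrite vleBrDr add0r. Qed.

Lemma vleB2l x y z : x <=: y -> z - y <=: z - x.
Proof. by move=> /vleN2 /(vleD2l z). Qed.

Lemma vleBl x y : 0 <=: y -> x - y <=: x.
Proof. by move=> /(vleB2l x); rewrite subr0. Qed.

Lemma vle_wpDl x y : 0 <=: x -> y <=: x + y.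
Proof. by move=> /(vle_add y); rewrite add0r. Qed.

Lemma vle_wpDr x y : 0 <=: x -> y <=: y + x.
Proof. by rewrite addrC; apply: vle_wpDl. Qed.

Lemma vle_swapBr x y z : x <=: z - y -> y <=: z - x.
Proof. by rewrite !vleBrDr addrC. Qed.

Lemma vleBr_le0 x y : x <=: x - y -> y <=: 0.
Proof. by move=> /vleBrDr /(vleD2l (- x)); rewrite addKr addNr. Qed.

Lemma vmulrn_ge0 x n : 0 <=: x -> 0 <=: x *+ n.
Proof.
move=> x0; elim: n => [|n IH]; first by rewrite mulr0n; apply: vle_refl.
by rewrite mulrS -[0]addr0; apply: vleD.
Qed.

Lemma vsupC x y : sup x y = sup y x.
Proof. by apply: vle_anti; apply: vsup_least; first [apply: vsup_ub1|apply: vsup_ub2]. Qed.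

Lemma vsup_le2 x y x' y' : x <=: x' -> y <=: y' -> sup x y <=: sup x' y'.
Proof.
move=> hx hy; apply: vsup_least.
- exact: vle_trans hx (vsup_ub1 L _ _).
- exact: vle_trans hy (vsup_ub2 L _ _).
Qed.

Lemma vsupDr x y z : sup (x + z) (y + z) = sup x y + z.
Proof.
apply: vle_anti.
  by apply: vsup_least; apply: vle_add; [apply: vsup_ub1|apply: vsup_ub2].
apply/vleBrDr; apply: vsup_least; apply/vleBrDr; [apply: vsup_ub1|apply: vsup_ub2].
Qed.

Lemma vinf_lb1 x y : inf x y <=: x.
Proof. by rewrite -[x in _ <=: x]opprK; apply/vleN2/vsup_ub1. Qed.

Lemma vinf_lb2 x y : inf x y <=: y.
Proof. by rewrite -[y in _ <=: y]opprK; apply/vleN2/vsup_ub2. Qed.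

Lemma vinf_greatest x y z : z <=: x -> z <=: y -> z <=: inf x y.
Proof.
by move=> /vleN2 hx /vleN2 hy; rewrite -[z]opprK; apply/vleN2/vsup_least.
Qed.

Lemma vinfC x y : inf x y = inf y x.
Proof. by rewrite /vinf vsupC. Qed.

Lemma vinf_le2 x y x' y' : x <=: x' -> y <=: y' -> inf x y <=: inf x' y'.
Proof.
move=> hx hy; apply: vinf_greatest.
- exact: vle_trans (vinf_lb1 _ _) hx.
- exact: vle_trans (vinf_lb2 _ _) hy.
Qed.

Lemma vinf_l x y : x <=: y -> inf x y = x.
Proof. by move=> h; apply: vle_anti (vinf_lb1 _ _) (vinf_greatest (vle_refl L _) h). Qed.

Lemma vinfDr x y z : inf (x + z) (y + z) = inf x y + z.
Proof. by rewrite /vinf !opprD vsupDr opprD opprK. Qed.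

Lemma vinfDl x y z : inf (z + x) (z + y) = z + inf x y.
Proof. by rewrite ![z + _]addrC vinfDr. Qed.

Lemma vaddr_sup_inf x y : x + y = sup x y + inf x y.
Proof.
rewrite /vinf; have -> : sup (- x) (- y) = sup x y - (x + y).
  apply: (addIr (x + y)); rewrite subrK -vsupDr addKr [x + y]addrC addKr.
  exact: vsupC.
by rewrite opprB addrCA subrr addr0.
Qed.

Lemma vle_abs x : x <=: abs x. Proof. exact: vsup_ub1. Qed.

Lemma vleN_abs x : - x <=: abs x. Proof. exact: vsup_ub2. Qed.

Lemma vabs_ge0 x : 0 <=: abs x.
Proof.
have h : 0 <=: abs x + abs x.
  by rewrite -(subrr x); apply: vleD; [apply: vle_abs|apply: vleN_abs].
have h2 : (0 : R) <= 2^-1 by rewrite invr_ge0.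
move: (vle_scale h2 h).
by rewrite scaler0 -mulr2n -[abs x *+ 2]scaler_nat scalerA mulVf ?pnatr_eq0 // scale1r.
Qed.

Lemma ger0_vabs x : 0 <=: x -> abs x = x.
Proof.
move=> x0; apply: vle_anti; last exact: vle_abs.
apply: vsup_least; first exact: vle_refl.
by apply: vle_trans (vleN2 x0) _; rewrite oppr0.
Qed.

Lemma vabsN x : abs (- x) = abs x.
Proof. by rewrite /vabs opprK vsupC. Qed.

Lemma vabsB x y : abs (x - y) = abs (y - x).
Proof. by rewrite -vabsN opprB. Qed.

Lemma vabs0 : abs 0 = 0.
Proof. exact/ger0_vabs/vle_refl. Qed.

Lemma vle_absD x y : abs (x + y) <=: abs x + abs y.
Proof.
apply: vsup_least; first by apply: vleD; apply: vle_abs.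
by rewrite opprD; apply: vleD; apply: vleN_abs.
Qed.

Lemma vinf_addl_le x y z : 0 <=: x -> 0 <=: y -> 0 <=: z -> inf (x + y) z <=: inf x z + inf y z.
Proof.
move=> x0 y0 z0.
have h : inf (x + y) z <=: inf x z + y.
  by rewrite -vinfDr; apply: vinf_le2; [apply: vle_refl|apply: vle_wpDr].
apply: vle_trans (vinf_greatest h (vinf_lb2 _ _)) _.
by rewrite -vinfDl; apply: vinf_le2; [apply: vle_refl|apply/vle_wpDl/vinf_greatest].
Qed.

Lemma vinf_eq0 x y : 0 <=: x -> 0 <=: y -> inf x y <=: 0 -> inf x y = 0.
Proof. by move=> x0 y0 /vle_anti; apply; apply: vinf_greatest. Qed.

Lemma vinf_eq0_le x y z : 0 <=: x -> 0 <=: z -> x <=: y -> inf y z = 0 -> inf x z = 0.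
Proof.
move=> x0 z0 xy yz; apply: vinf_eq0 => //.
by rewrite -yz; apply: vinf_le2 xy (vle_refl L _).
Qed.

Lemma vleD_disj x y z : inf x y <=: 0 -> x <=: z -> y <=: z -> x + y <=: z.
Proof.
move=> xy0 xz yz; rewrite vaddr_sup_inf -[z]addr0.
by apply: vleD => //; apply: vsup_least.
Qed.

Lemma vsumr_ge0 (z : nat -> E) n : (forall i, 0 <=: z i) -> 0 <=: \sum_(i < n) z i.
Proof.
move=> z0; elim: n => [|n IH]; first by rewrite big_ord0; apply: vle_refl.
by rewrite big_ord_recr; move: (vleD IH (z0 n)); rewrite addr0.
Qed.

Lemma vsum_le_prefix (z : nat -> E) m n : (forall i, 0 <=: z i) -> (m <= n)%N ->
  \sum_(i < m) z i <=: \sum_(i < n) z i.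
Proof.
move=> z0 /subnK <-; elim: (n - m)%N => [|k IH]; first exact: vle_refl.
by rewrite addSn big_ord_recr; apply: vle_trans IH (vle_wpDr _ _).
Qed.

Lemma vle_sum_term (z : nat -> E) n : (forall i, 0 <=: z i) -> z n <=: \sum_(i < n.+1) z i.
Proof. by move=> z0; rewrite big_ord_recr; apply/vle_wpDl/vsumr_ge0. Qed.

Definition videal (A : set E) : Prop :=
  [/\ A 0, solid L A & forall a b, A a -> A b -> A (a + b)].

Hypothesis archL : archimedean_vl L.

(* With [r := q - q /\ z] and [v := r /\ |a|], induction in the ideal [A] gives
   [n v <= q /\ z] for every [n], so [v = 0] by the Archimedean property. *)
Lemma videal_gap_disjoint A q z : videal A -> 0 <=: q ->
  (forall t, A t -> 0 <=: t -> t <=: q -> t <=: z) ->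
  forall a, A a -> inf (q - inf q z) (abs a) = 0.
Proof.
move=> [A0 solidA addA] q0 zub a Aa; set r := q - inf q z.
have r0 : 0 <=: r by apply/vsubr_ge0/vinf_lb1.
set v := inf r (abs a).
have v0 : 0 <=: v := vinf_greatest r0 (vabs_ge0 _).
have Av : A v by apply: (solidA a) Aa _; rewrite (ger0_vabs v0); apply: vinf_lb2.
have vn : forall n, A (v *+ n) /\ v *+ n <=: q.
  elim=> [|n [Avn vnq]]; first by rewrite mulr0n; split.
  rewrite mulrS addrC; split; first exact: addA.
  have vnz := vinf_greatest vnq (zub _ Avn (vmulrn_ge0 n v0) vnq).
  have -> : q = inf q z + r by rewrite /r addrC subrK.
  exact: vleD vnz (vinf_lb1 _ _).
by apply: vle_anti v0; apply: archL => n; apply: (vn n).2.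
Qed.

Lemma videal_interval_sup A q : videal A -> 0 <=: q ->
  (forall r, 0 <=: r -> r <=: q -> (forall a, A a -> inf r (abs a) = 0) -> r = 0) ->
  is_sup L [set t | A t /\ 0 <=: t /\ t <=: q] q.
Proof.
move=> idA q0 disj0; split=> [t [_ [_ //]]|z zub].
have z0 : 0 <=: z by apply: zub; split; [case: idA|split=> //; apply: vle_refl].
have gap := videal_gap_disjoint idA q0 (fun t At t_ge0 t_le => zub t (conj At (conj t_ge0 t_le))).
have /eqP : q - inf q z = 0.
  apply: disj0 => //; first by apply/vsubr_ge0/vinf_lb1.
  exact/vleBl/vinf_greatest.
by rewrite subr_eq0 => /eqP ->; apply: vinf_lb2.
Qed.

Lemma vsup_disjoint C u t : 0 <=: u -> is_sup L C u ->
  (forall c, C c -> inf (abs c) (abs t) = 0) -> inf (abs u) (abs t) = 0.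
Proof.
move=> u0 [uub ulub] disj; rewrite (ger0_vabs u0); set r := inf u (abs t).
have r0 : 0 <=: r := vinf_greatest u0 (vabs_ge0 t).
have : u <=: u - r.
  apply: ulub => c Cc; apply/vleBrDr/vleD_disj; [|exact: uub|exact: vinf_lb1].
  by rewrite -(disj c Cc); apply: vinf_le2; [apply: vle_abs|apply: vinf_lb2].
by move/vleBr_le0/vle_anti; apply.
Qed.

Definition eventual_ub (z : nat -> E) (y : E) : Prop :=
  exists n, forall k, (n <= k)%N -> z k <=: y.

Lemma eventual_ub_ge0 (z : nat -> E) y : (forall n, 0 <=: z n) -> eventual_ub z y -> 0 <=: y.
Proof. by move=> z0 [n zy]; apply: vle_trans (z0 n) (zy n (leqnn n)). Qed.

Lemma eventual_ub_inf (z : nat -> E) a b :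
  eventual_ub z a -> eventual_ub z b -> eventual_ub z (inf a b).
Proof.
move=> [na ha] [nb hb]; exists (maxn na nb) => k; rewrite geq_max => /andP[ka kb].
by apply: vinf_greatest; [apply: ha|apply: hb].
Qed.

Lemma eventual_ub_translate_le0 (z : nat -> E) p w q : 0 <=: p ->
  (forall y, eventual_ub z y -> p <=: y) -> eventual_ub z w ->
  (forall y, eventual_ub z y -> eventual_ub z (y - q)) -> q <=: 0.
Proof.
move=> p0 plb zw zq.
have wq : forall j, eventual_ub z (w - q *+ j).
  by elim=> [|j IH]; [rewrite mulr0n subr0|rewrite mulrSr opprD addrA; apply: zq].
apply: archL => j; apply: vle_trans (vle_swapBr (plb _ (wq j))) _.
exact: vleBl.
Qed.

End VectorLatticeAlgebra.

Arguments videal {R E} L A.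
Arguments eventual_ub {R E} L z y.

Section NormalSequences.
Context {R : realType} {E : topologicalLmodType R} {L : vector_lattice E}.
Local Notation "x <=: y" := (vle L x y) (at level 70).
Local Notation normal := (normal_solid_seq L).
Implicit Types V W : nat -> set E.

Lemma normal_seq_nbhs V n : normal V -> nbhs (0 : E) (V n).
Proof. by move=> /(_ n) []. Qed.

Lemma normal_seq_solid V n : normal V -> solid L (V n).
Proof. by move=> /(_ n) [_ []]. Qed.

Lemma normal_seq_add V n a b : normal V -> V n.+1 a -> V n.+1 b -> V n (a + b).
Proof. by move=> /(_ n) [_ [_]]; apply. Qed.

Lemma normal_seq0 V n : normal V -> V n 0.
Proof. by move=> nV; apply: nbhs_singleton (normal_seq_nbhs n nV). Qed.

Lemma normal_seq_decr V m n : normal V -> (m <= n)%N -> V n `<=` V m.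
Proof.
move=> nV /subnK <-; elim: (n - m)%N => [|k IH] t //.
rewrite addSn => Vt; apply: IH; rewrite -[t]addr0.
by apply: normal_seq_add; last exact: normal_seq0.
Qed.

Lemma normal_kernel_ideal V : normal V -> videal L (\bigcap_n V n).
Proof.
move=> nV; split=> [n _|x y Nx yx n _|a b Na Nb n _]; first exact: normal_seq0.
- exact: (normal_seq_solid nV (Nx n I) yx).
- by apply: normal_seq_add; [|apply: Na|apply: Nb].
Qed.

Lemma normal_seq_sum_tail W (z : nat -> E) : normal W -> (forall j, W j (z j)) ->
  forall m j, W j (\sum_(i < m) z (j.+1 + i)%N).
Proof.
move=> nW Wz; elim=> [|m IH] j; first by rewrite big_ord0; apply: normal_seq0.
rewrite big_ord_recl addn0; apply: normal_seq_add => //.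
by under eq_bigr => i _ do rewrite lift0 addnS; apply: IH.
Qed.

Fixpoint meet_prefix (V : nat -> nat -> set E) (n m : nat) : set E :=
  if n is k.+1 then meet_prefix V k m `&` V k m else setT.

Section MeetPrefix.
Variable V : nat -> nat -> set E.
Hypothesis nV : forall k, normal (V k).

Lemma meet_prefix_nbhs n m : nbhs (0 : E) (meet_prefix V n m).
Proof. by elim: n => [|n IH] /=; [apply: filterT|apply: filterI IH (normal_seq_nbhs m (nV n))]. Qed.

Lemma meet_prefix_diag_normal : normal (fun n => meet_prefix V n n).
Proof.
have solidM n m : solid L (meet_prefix V n m).
  elim: n => [|n IH] //= x y [Mx Vx] yx.
  by split; [apply: IH Mx yx|exact: (normal_seq_solid (nV n) Vx yx)].
have addM n m a b : meet_prefix V n m.+1 a -> meet_prefix V n m.+1 b -> meet_prefix V n m (a + b).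
  elim: n => [|n IH] //= [Ma Va] [Mb Vb].
  by split; [apply: IH|apply: normal_seq_add].
move=> n; split; first exact: meet_prefix_nbhs.
by split=> // a b [Ma _] [Mb _]; apply: addM.
Qed.

Lemma meet_prefix_diag_kernel k :
  \bigcap_n meet_prefix V n n `<=` \bigcap_n V k n.
Proof.
have inV n m t i : meet_prefix V n m t -> (i < n)%N -> V i m t.
  elim: n => [|n IH] //= [Mt Vt]; rewrite ltnS leq_eqVlt => /orP[/eqP->//|].
  exact: IH.
move=> t Mt m _; have km : (k < (maxn k m).+1)%N by rewrite ltnS leq_maxl.
apply: (normal_seq_decr (nV k) (leq_trans (leq_maxr k m) (leqnSn _))).
exact: inV (Mt _ I) km.
Qed.

End MeetPrefix.

Lemma normal_seq_countable_meet (V : nat -> nat -> set E) : (forall k, normal (V k)) ->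
  exists2 W, normal W & forall k, \bigcap_n W n `<=` \bigcap_n V k n.
Proof.
by move=> nV; exists (fun n => meet_prefix V n n);
  [apply: meet_prefix_diag_normal|apply: meet_prefix_diag_kernel].
Qed.

Hypothesis solidL : locally_solid L.

Lemma nbhs0_solid_half A : nbhs (0 : E) A ->
  exists B, [/\ nbhs (0 : E) B, solid L B & forall a b, B a -> B b -> A (a + b)].
Proof.
move=> A0; have := @add_continuous E (0, 0) A; rewrite /= addr0 => /(_ A0).
move=> [[B1 B2]] /= [B10 B20] B12; have [B [B0 [sB BB]]] := solidL (filterI B10 B20).
by exists B; split=> // a b Ba Bb; apply: (B12 (a, b)); split; [case: (BB _ Ba)|case: (BB _ Bb)].
Qed.

Lemma nbhs0_normal_seq U : nbhs (0 : E) U -> exists2 V, normal V & V 0%N `<=` U.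
Proof.
have next A : {B : set E | nbhs (0 : E) A ->
    [/\ nbhs (0 : E) B, solid L B & forall a b, B a -> B b -> A (a + b)]}.
  case: (pselect (nbhs (0 : E) A)) => [/nbhs0_solid_half/cid[B hB]|nA]; first by exists B.
  by exists setT => /nA.
move=> U0; have [V0 [V00 [sV0 V0U]]] := solidL U0.
pose V := fix V n := if n is k.+1 then proj1_sig (next (V k)) else V0.
have V_nbhs_solid n : nbhs (0 : E) (V n) /\ solid L (V n).
  by elim: n => [//|n [Vn _]]; case: (proj2_sig (next (V n)) Vn).
exists V; last exact: V0U.
by move=> n; have [Vn0 sVn] := V_nbhs_solid n; case: (proj2_sig (next (V n)) Vn0).
Qed.

End NormalSequences.

Section DirectedSets.
Context {R : realType} {E : lmodType R} {L : vector_lattice E}.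
Local Notation "x <=: y" := (vle L x y) (at level 70).

Definition sup_closed_dirset (P : set E) (p0 : {t | P t})
    (supP : forall a b, P a -> P b -> P (vsup L a b)) : dirset {t | P t} :=
  @DirSet _ (fun a b => proj1_sig a <=: proj1_sig b)
    (fun a => vle_refl L _) (fun a b c => @vle_trans _ _ L _ _ _)
    (fun a b => ex_intro _ (exist P _ (supP _ _ (proj2_sig a) (proj2_sig b)))
       (conj (vsup_ub1 L _ _) (vsup_ub2 L _ _)))
    (inhabits p0).

Definition inf_closed_dirset (P : set E) (p0 : {t | P t})
    (infP : forall a b, P a -> P b -> P (vinf L a b)) : dirset {t | P t} :=
  @DirSet _ (fun a b => proj1_sig b <=: proj1_sig a)
    (fun a => vle_refl L _) (fun a b c ab bc => vle_trans bc ab)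
    (fun a b => ex_intro _ (exist P _ (infP _ _ (proj2_sig a) (proj2_sig b)))
       (conj (vinf_lb1 _ _) (vinf_lb2 _ _)))
    (inhabits p0).

End DirectedSets.

Lemma seq_subset_directed (T : eqType) (s t : seq T) :
  exists u : seq T, {subset s <= u} /\ {subset t <= u}.
Proof. by exists (s ++ t); split=> x x_in; rewrite mem_cat x_in ?orbT. Qed.

Definition seq_dirset (T : eqType) : dirset (seq T) :=
  @DirSet _ (fun s t : seq T => {subset s <= t}) (fun s x => id)
    (fun s t u st tu x xs => tu x (st x xs)) (@seq_subset_directed T) (inhabits [::]).

Section OrderConvergence.
Context {R : realType} {E : topologicalLmodType R} {L : vector_lattice E}.
Local Notation "x <=: y" := (vle L x y) (at level 70).

Lemma decr_to0_oconv I (D : dirset I) (y : I -> E) : decr_to0 L D y -> oconv L D y 0.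
Proof.
move=> yd; have [ydec [ylb _]] := yd; exists I, D, y; split=> // b0; exists b0 => a b0a.
by rewrite subr0 ger0_vabs; [apply: ydec|apply: ylb; exists a].
Qed.

Lemma nondecreasing_oconv I (D : dirset I) (m : I -> E) s :
  (forall a b, dle D a b -> m a <=: m b) -> is_sup L (range m) s -> oconv L D m s.
Proof.
move=> mnd [mub mlub].
have md : decr_to0 L D (fun a => s - m a).
  split=> [a b ab|]; first exact/vleB2l/mnd.
  split=> [_ [a _ <-]|v vlb]; first by apply/vsubr_ge0/mub; exists a.
  apply: (@vleBr_le0 _ _ _ s); apply: mlub => _ [a _ <-].
  by apply: vle_swapBr; apply: vlb; exists a.
have [J [DJ [y [yd ym]]]] := decr_to0_oconv md.
exists J, DJ, y; split=> // b; have [a0 a0y] := ym b; exists a0 => a a0a.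
by move: (a0y a a0a); rewrite !subr0 vabsB.
Qed.

Lemma oconv_eq_subr I (D : dirset I) (x x' : I -> E) l l' :
  oconv L D x l -> (forall a, x' a - l' = x a - l) -> oconv L D x' l'.
Proof.
move=> [J [DJ [y [yd xy]]]] xx'; exists J, DJ, y; split=> // b.
by have [a0 a0y] := xy b; exists a0 => a /a0y; rewrite xx'.
Qed.

Lemma eventual_ub_oconv0 (z : nat -> E) w : (forall n, 0 <=: z n) -> eventual_ub L z w ->
  (forall p, 0 <=: p -> (forall y, eventual_ub L z y -> p <=: y) -> p <=: 0) ->
  oconv L natD z 0.
Proof.
move=> z0 zw lb_le0.
pose D := inf_closed_dirset (exist _ w zw) (@eventual_ub_inf _ _ L z).
exists _, D, (@proj1_sig _ _); split.
  split=> [b b' //|]; split=> [_ [[y zy] _ <-]|v vlb]; first exact: eventual_ub_ge0 zy.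
  apply: vle_trans (vsup_ub1 L v 0) _; apply: lb_le0; first exact: vsup_ub2.
  move=> y zy; apply: vsup_least; last exact: eventual_ub_ge0 zy.
  by apply: vlb; exists (exist _ y zy).
move=> [y [n zy]]; exists n => k nk /=.
by rewrite subr0 ger0_vabs; [apply: zy|apply: z0].
Qed.

Lemma tconv_subr I (D : dirset I) (x : I -> E) l : tconv D x l ->
  forall U, nbhs (0 : E) U -> exists a0, forall a, dle D a0 a -> U (x a - l).
Proof.
move=> xl U U0; have [a0 a0U] := xl _ (nbhsT_subproof (@add_continuous E) l U0).
by exists a0 => a /a0U [u Uu <-]; rewrite addrC addKr.
Qed.

Lemma hausdorff_nbhs0 r : hausdorff_space E -> (forall U, nbhs (0 : E) U -> U r) -> r = 0.
Proof.
move=> hE rU; apply/esym/hE => A B A0 Br.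
by exists r; split; [apply: rU|apply: nbhs_singleton].
Qed.

Lemma tconv_embedded_step I (D : dirset I) (x : I -> E) l : tconv D x l ->
  forall a U, nbhs (0 : E) U -> exists a', [/\ dle D a a',
    ((~ exists m, forall b, dle D b m) -> dlt D a a') &
    forall b, dle D a' b -> U (x b - l)].
Proof.
move=> xl a U U0; have [a0 a0U] := tconv_subr xl U0.
have [c [ac a0c]] := dle_dir D a a0.
have cU b : dle D c b -> U (x b - l) by move=> cb; apply: a0U; apply: dle_trans a0c cb.
case: (pselect (exists m, forall b, dle D b m)) => [maxD|nomax].
  by exists c; split=> // /(_ maxD).
have [b nbc] : exists b, ~ dle D b c.
  by apply: contrapT => nb; apply: nomax; exists c => b; apply: contrapT => bc; apply: nb; exists b.
have [d [cd bd]] := dle_dir D c b.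
exists d; split=> [|_|b' db']; first exact: dle_trans ac cd.
- by split=> [|da]; [apply: dle_trans ac cd|apply: nbc; apply: dle_trans bd (dle_trans da ac)].
- by apply: cU; apply: dle_trans cd db'.
Qed.

End OrderConvergence.

Lemma countable_range_cover (T : choiceType) (C : set T) (x0 : T) : countable C ->
  exists c : nat -> T, C `<=` range c /\ forall n, C (c n) \/ c n = x0.
Proof.
move=> /countable_injP[f finj].
exists (fun n => xget x0 [set y | C y /\ f y = n]); split=> [y Cy|n].
  exists (f y) => //; case: xgetP => [y' _ [Cy' fy']|/(_ y)/=]; last by case.
  by apply: finj; rewrite ?inE.
by case: xgetP => [y _ []|_]; [left|right].
Qed.

Section Carrier.
Context {R : realType} {E : topologicalLmodType R} {L : vector_lattice E}.
Local Notation "x <=: y" := (vle L x y) (at level 70).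
Local Notation inf := (vinf L).
Local Notation abs := (vabs L).
Local Notation normal := (normal_solid_seq L).
Hypotheses (archL : archimedean_vl L) (olebL : o_lebesgue L).

(* [q] is the supremum of the kernel in [[0, q]]; the o-Lebesgue property puts an
   element of the kernel within [V n.+1] of [q]. *)
Lemma normal_kernel_band V q : normal V -> 0 <=: q ->
  (forall t, dcompl L (\bigcap_n V n) t -> inf (abs q) (abs t) = 0) ->
  (\bigcap_n V n) q.
Proof.
move=> nV q0 q_dd; set N := \bigcap_n V n; have idN := normal_kernel_ideal nV.
pose P t := N t /\ 0 <=: t /\ t <=: q.
have P0 : P 0 by split; [case: idN|split; [apply: vle_refl|]].
have supP a b : P a -> P b -> P (vsup L a b).
  move=> [Na [a0 aq]] [Nb [b0 bq]]; have ab0 := vle_trans a0 (vsup_ub1 L a b).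
  split; last by split=> //; apply: vsup_least.
  case: idN => _ solidN addN; apply: solidN (addN _ _ Na Nb) _.
  rewrite (ger0_vabs ab0) ger0_vabs; last by rewrite -[0]addr0; apply: vleD.
  by apply: vsup_least; [apply: vle_wpDr|apply: vle_wpDl].
have Psup : is_sup L (range (@proj1_sig _ P)) q.
  have -> : range (@proj1_sig _ P) = P.
    by apply/seteqP; split=> [_ [[t Pt] _ <-] //|t Pt]; exists (exist P t Pt).
  apply: videal_interval_sup => // r r0 rq rN.
  have rd : dcompl L N r by move=> t Nt; rewrite (ger0_vabs r0) rN.
  by move: (q_dd r rd); rewrite (ger0_vabs q0) (ger0_vabs r0) vinfC vinf_l.
pose D := sup_closed_dirset (exist P 0 P0) supP.
have Pq := olebL.2 _ D _ _ (nondecreasing_oconv (fun a b (ab : dle D a b) => ab) Psup).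
move=> n _; have [a0 a0q] := tconv_subr Pq (normal_seq_nbhs n.+1 nV).
have tq := a0q _ (dle_refl D a0); case: a0 {a0q} tq => t [Nt _] /= tq.
have -> : q = t + (q - t) by rewrite addrC subrK.
apply: (normal_seq_add nV (Nt _ I)).
by apply: (normal_seq_solid nV tq); rewrite vabsB; apply: vle_refl.
Qed.

Lemma carrier_ideal : videal L (carrier L).
Proof.
split=> [|x y [V [nV xd]] yx|a b [Va [nVa ad]] [Vb [nVb bd]]].
- exists (fun _ => setT); split=> [n|y _]; first by split; [apply: filterT|split].
  by rewrite vabs0; apply: vinf_l; apply: vabs_ge0.
- exists V; split=> // t Nt.
  exact: vinf_eq0_le (vabs_ge0 y) (vabs_ge0 t) yx (xd t Nt).
exists (fun n => Va n `&` Vb n); split.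
  move=> n; split; first exact: filterI (normal_seq_nbhs n nVa) (normal_seq_nbhs n nVb).
  split=> [x y [Vax Vbx] yx|x y [? ?] [? ?]]; last by split; apply: normal_seq_add.
  by split; [exact: (normal_seq_solid nVa Vax yx)|exact: (normal_seq_solid nVb Vbx yx)].
move=> t Nt; apply: vinf_eq0; [apply: vabs_ge0|apply: vabs_ge0|].
apply: vle_trans (vinf_le2 (vle_absD a b) (vle_refl L _)) _.
apply: vle_trans (vinf_addl_le (vabs_ge0 a) (vabs_ge0 b) (vabs_ge0 t)) _.
rewrite ad ?bd ?addr0; first exact: vle_refl.
- by move=> n _; case: (Nt n I).
- by move=> n _; case: (Nt n I).
Qed.

Lemma carrier_disjoint_eq0 r : hausdorff_space E -> 0 <=: r ->
  (forall a, carrier L a -> inf r (abs a) = 0) -> r = 0.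
Proof.
move=> hE r0 rd; apply: (hausdorff_nbhs0 hE) => U U0.
have [V nV VU] := nbhs0_normal_seq olebL.1 U0; apply: VU.
suff rN : (\bigcap_n V n) r by apply: rN 0%N I.
apply: (normal_kernel_band nV r0) => t td.
by rewrite (ger0_vabs r0); apply: rd; exists V.
Qed.

Lemma carrier_seq_common_normal (c : nat -> E) : (forall n, carrier L (c n)) ->
  exists2 W, normal W & forall n, dcompl L (\bigcap_k W k) (c n).
Proof.
move=> /(_ _)/cid cC.
have [W nW WV] := normal_seq_countable_meet (fun n => (proj2_sig (cC n)).1).
by exists W => // n t Wt; apply: (proj2_sig (cC n)).2; apply: WV.
Qed.

Lemma carrier_full_of_countable_sup : hausdorff_space E ->
  countable_sup_property L -> carrier L = setT.
Proof.
move=> hE csp; apply/seteqP; split=> // x _.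
have := videal_interval_sup archL carrier_ideal (vabs_ge0 x)
  (fun r r0 _ => carrier_disjoint_eq0 hE r0).
move=> /csp[C [CD [Ccount Csup]]].
have [c [Cc cC]] := countable_range_cover 0 Ccount.
have [carrier0 solidC _] := carrier_ideal.
have [W nW Wc] : exists2 W, normal W & forall n, dcompl L (\bigcap_k W k) (c n).
  by apply: carrier_seq_common_normal => n; case: (cC n) => [/CD[]|->].
apply: (solidC (abs x)); last by rewrite (ger0_vabs (vabs_ge0 x)); apply: vle_refl.
exists W; split=> // t Nt.
apply: vsup_disjoint (vabs_ge0 x) Csup _ => _ /Cc[n _ <-].
exact: Wc.
Qed.

End Carrier.

Section EmbeddedSequences.
Context {R : realType} {E : topologicalLmodType R} {L : vector_lattice E}.
Local Notation "x <=: y" := (vle L x y) (at level 70).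
Local Notation inf := (vinf L).
Local Notation abs := (vabs L).
Local Notation normal := (normal_solid_seq L).
Hypotheses (archL : archimedean_vl L) (olebL : o_lebesgue L).

Section EventualLowerBound.
Variables (z : nat -> E) (w p : E).
Hypotheses (z_ge0 : forall n, 0 <=: z n) (zw : eventual_ub L z w) (p_ge0 : 0 <=: p)
  (p_lb : forall y, eventual_ub L z y -> p <=: y).

Lemma tail_gap_decr_to0 j :
  decr_to0 L natD (fun m => vsup L (p - \sum_(i < m) z (j + i)%N) 0).
Proof.
have zj_ge0 i : 0 <=: z (j + i)%N by [].
split=> [m m' mm'|]; first exact: vsup_le2 (vleB2l _ (vsum_le_prefix zj_ge0 mm')) (vle_refl L 0).
split=> [_ [m _ <-]|v vlb]; first exact: vsup_ub2.
set q := vsup L v 0.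
have q_le_g m : q <=: vsup L (p - \sum_(i < m) z (j + i)%N) 0.
  by apply: vsup_least; [apply: vlb; exists m|apply: vsup_ub2].
apply: vle_trans (vsup_ub1 L v 0) _.
apply: (eventual_ub_translate_le0 archL p_ge0 p_lb zw) => y [n zy].
exists (maxn n j) => k; rewrite geq_max => /andP[nk jk].
have zkS : z k <=: \sum_(i < (k - j).+1) z (j + i)%N.
  by move: (vle_sum_term (k - j) zj_ge0); rewrite subnKC.
apply: vle_swapBr; apply: vle_trans (q_le_g (k - j).+1) _.
apply: vsup_least; last exact/vsubr_ge0/zy.
by apply: vle_trans (vleB2l _ zkS) _; apply: vle_add; apply: p_lb; exists n.
Qed.

(* The partial sums of the tail of [z] stay in [W n.+1], and by the o-Lebesgue
   property so does [(p - tail sum)^+] for a long enough tail; their sum dominates [p]. *)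
Lemma eventual_lb_in_kernel W : normal W -> (forall n, W n (z n)) -> (\bigcap_n W n) p.
Proof.
move=> nW zW n _; set S := fun m => \sum_(i < m) z (n.+2 + i)%N.
have := olebL.2 _ _ _ _ (decr_to0_oconv (tail_gap_decr_to0 n.+2)).
move=> /tconv_subr /(_ _ (normal_seq_nbhs n.+1 nW)) [m /(_ m (leqnn m))].
rewrite subr0 => gW; have SW : W n.+1 (S m) := normal_seq_sum_tail nW zW m n.+1.
apply: (normal_seq_solid nW (normal_seq_add nW gW SW)).
have S_ge0 : 0 <=: S m := vsumr_ge0 m (fun i => z_ge0 (n.+2 + i)).
rewrite (ger0_vabs p_ge0) ger0_vabs; first exact/vleBlDr/vsup_ub1.
by move: (vleD (vsup_ub2 L (p - S m) 0) S_ge0); rewrite addr0.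
Qed.

End EventualLowerBound.

Lemma uoconv_of_normal_seq (y : nat -> E) l W : normal W ->
  (forall n, W n (y n - l)) -> (forall n, dcompl L (\bigcap_k W k) (y n - l)) ->
  uoconv L natD y l.
Proof.
move=> nW yW yd v; set z := fun n => inf (abs (y n - l)) (abs v).
have z_ge0 n : 0 <=: z n := vinf_greatest (vabs_ge0 _) (vabs_ge0 _).
have zv : eventual_ub L z (abs v) by exists 0%N => k _; apply: vinf_lb2.
apply: (eventual_ub_oconv0 z_ge0 zv) => p p_ge0 p_lb.
have zW n : W n (z n).
  by apply: (normal_seq_solid nW (yW n)); rewrite (ger0_vabs (z_ge0 n)); apply: vinf_lb1.
have pN := eventual_lb_in_kernel z_ge0 zv p_ge0 p_lb nW zW.
apply: (eventual_ub_translate_le0 archL p_ge0 p_lb zv) => u [n zu]; exists n => k nk.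
apply/vleBrDr/vleD_disj; [|exact: zu|by apply: p_lb; exists n].
by rewrite -(yd k p pN); apply: vinf_le2; [apply: vinf_lb1|apply: vle_abs].
Qed.

(* [st n] pairs [alpha n] with the meet of the normal sequences attached to
   [x (alpha 0) - l], ..., [x (alpha n.-1) - l]. *)
Lemma tconv_embedded_normal_seq I (D : dirset I) (x : I -> E) l :
  carrier L = setT -> tconv D x l ->
  exists alpha : nat -> I, embedded_indices D alpha /\ exists2 W, normal W &
    forall n, W n (x (alpha n) - l) /\ dcompl L (\bigcap_k W k) (x (alpha n) - l).
Proof.
move=> full xl; have Cx a : carrier L (x a - l) by rewrite full.
pose V a := proj1_sig (cid (Cx a)).
have nV a : normal (V a) := (proj2_sig (cid (Cx a))).1.
have Vd a : dcompl L (\bigcap_k V a k) (x a - l) := (proj2_sig (cid (Cx a))).2.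
pose next a (U : set E) :=
  if pselect (nbhs (0 : E) U) is left U0 then proj1_sig (cid (tconv_embedded_step xl a U0)) else a.
have nextP a U : nbhs (0 : E) U -> [/\ dle D a (next a U),
    ((~ exists m, forall b, dle D b m) -> dlt D a (next a U)) &
    forall b, dle D (next a U) b -> U (x b - l)].
  move=> U0; rewrite /next; case: pselect => // U1.
  exact: (proj2_sig (cid (tconv_embedded_step xl a U1))).
case: (dle_inh D) => a0.
pose st := fix st n := if n is k.+1 then let: (a, H) := st k in
    (next a (H k.+1 `&` V a k.+1), fun m => H m `&` V a m)
  else (a0, fun _ : nat => [set: E]).
pose alpha n := (st n).1.
have stE n : (st n).2 = meet_prefix (fun k => V (alpha k)) n.
  by elim: n => [//|n /=]; rewrite /alpha /=; case: (st n) => a H /= ->.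
pose W' k := V (alpha k).
have nW' k : normal (W' k) by apply: nV.
have spec n : [/\ dle D (alpha n) (alpha n.+1),
    ((~ exists m, forall b, dle D b m) -> dlt D (alpha n) (alpha n.+1)) &
    forall b, dle D (alpha n.+1) b -> meet_prefix W' n.+1 n.+1 (x b - l)].
  have -> : alpha n.+1 = next (alpha n) (meet_prefix W' n.+1 n.+1).
    by rewrite /= -stE /W' /alpha /=; case: (st n).
  exact/nextP/meet_prefix_nbhs.
exists alpha; split.
  by split=> [n|noMax n]; have [? lt _] := spec n; last exact: lt.
exists (fun n => meet_prefix W' n n); first exact: meet_prefix_diag_normal.
move=> n; split; first by case: n => [//|n]; have [_ _] := spec n; apply; apply: dle_refl.
by move=> t Wt; apply: Vd; apply: meet_prefix_diag_kernel nW' n t Wt.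
Qed.

Lemma embedded_uoconv_of_carrier_full I (D : dirset I) (x : I -> E) l :
  carrier L = setT -> tconv D x l ->
  exists alpha : nat -> I, embedded_indices D alpha /\ uoconv L natD (x \o alpha) l.
Proof.
move=> full xl; have [alpha [emb [W nW xW]]] := tconv_embedded_normal_seq full xl.
by exists alpha; split=> //; apply: (uoconv_of_normal_seq nW) => n; case: (xW n).
Qed.

End EmbeddedSequences.

Section FiniteSups.
Context {R : realType} {E : lmodType R} {L : vector_lattice E}.
Local Notation "x <=: y" := (vle L x y) (at level 70).
Variables (S : set E) (s0 : E).
Hypothesis Ss0 : S s0.

(* Finite suprema are indexed by arbitrary finite sequences of [E] (a directed set
   with decidable membership); points outside [S] are replaced by [s0]. *)
Definition retract_to (a : E) : E := if pselect (S a) then a else s0.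

Definition finsup (F : seq E) : E := foldr (fun a acc => vsup L (retract_to a) acc) s0 F.

Lemma retract_toS a : S (retract_to a).
Proof. by rewrite /retract_to; case: pselect. Qed.

Lemma retract_to_id a : S a -> retract_to a = a.
Proof. by rewrite /retract_to; case: pselect. Qed.

Lemma finsup_ge_base F : s0 <=: finsup F.
Proof. by elim: F => [|a F IH] /=; [apply: vle_refl|apply: vle_trans IH (vsup_ub2 L _ _)]. Qed.

Lemma finsup_ub F a : a \in F -> retract_to a <=: finsup F.
Proof.
elim: F => [|b F IH] //=; rewrite inE => /orP[/eqP->|aF]; first exact: vsup_ub1.
exact: vle_trans (IH aF) (vsup_ub2 L _ _).
Qed.

Lemma finsup_least F z : s0 <=: z -> (forall a, a \in F -> retract_to a <=: z) -> finsup F <=: z.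
Proof.
elim: F => [|b F IH] s0z Fz //=; apply: vsup_least; first by apply: Fz; rewrite mem_head.
by apply: IH => // a aF; apply: Fz; rewrite in_cons aF orbT.
Qed.

Lemma finsup_subset F G : {subset F <= G} -> finsup F <=: finsup G.
Proof. by move=> FG; apply: finsup_least (finsup_ge_base G) _ => a /FG /finsup_ub. Qed.

Lemma is_sup_finsup s : is_sup L S s -> is_sup L (range finsup) s.
Proof.
move=> [sub slub]; split=> [_ [F _ <-]|z zub].
  by apply: finsup_least (sub _ Ss0) _ => a _; apply/sub/retract_toS.
apply: slub => a Sa; rewrite -(retract_to_id Sa).
by apply: vle_trans (finsup_ub (mem_head a [::])) _; apply: zub; exists [:: a].
Qed.

End FiniteSups.

Arguments finsup {R E} L S s0 F.

Section CountableSup.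
Context {R : realType} {E : topologicalLmodType R} {L : vector_lattice E}.
Local Notation "x <=: y" := (vle L x y) (at level 70).

Lemma uoconv_bounded_le (x : nat -> E) s z : (forall n, 0 <=: x n) -> (forall n, x n <=: s) ->
  uoconv L natD x s -> (forall n, x n <=: z) -> s <=: z.
Proof.
move=> x0 xs xuo xz; have [J [DJ [y [[_ [_ yglb]] xy]]]] := xuo s.
suff : vsup L (s - z) 0 <=: 0 by move/(vle_trans (vsup_ub1 L _ _))/vleBlDr; rewrite add0r.
apply: yglb => _ [b _ <-]; have [n n_y] := xy b; move: (n_y n (leqnn n)) => /=.
have s0 : 0 <=: s := vle_trans (x0 n) (xs n).
have sx0 : 0 <=: s - x n by apply/vsubr_ge0.
rewrite subr0 vabsB (ger0_vabs sx0) (ger0_vabs s0) (vinf_l (vleBl _ (x0 n))) (ger0_vabs sx0).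
move=> sx_y; apply: vle_trans _ sx_y.
by apply: vsup_least; [apply: vleB2l|apply/vsubr_ge0].
Qed.

Lemma countable_sup_of_embedded_uoconv : o_lebesgue L ->
  (forall (I : Type) (D : dirset I) (x : I -> E) (l : E),
      increasing_pos_net L D x -> tconv D x l ->
      exists alpha : nat -> I, embedded_indices D alpha /\ uoconv L natD (x \o alpha) l) ->
  countable_sup_property L.
Proof.
move=> olebL embed S s Ss.
have [[s0 Ss0]|noS] := pselect (exists s0, S s0); last first.
  exists set0; split=> //; split=> //; split=> // z _.
  by apply: Ss.2 => y Sy; exfalso; apply: noS; exists y.
pose x F := finsup L S s0 F - s0.
have xpos : increasing_pos_net L (seq_dirset E) x.
  split=> [F|F G FG]; first exact/vsubr_ge0/finsup_ge_base.
  exact/vle_add/finsup_subset.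
have xs : oconv L (seq_dirset E) x (s - s0).
  apply: oconv_eq_subr (nondecreasing_oconv (D := seq_dirset E) (@finsup_subset _ _ L S s0)
    (is_sup_finsup Ss0 Ss)) _.
  by move=> F; rewrite /x opprB addrA subrK.
have [alpha [_ xuo]] := embed _ _ _ _ xpos (olebL.2 _ _ _ _ xs).
set C := \bigcup_n [set` s0 :: map (retract_to S s0) (alpha n)].
have CS : C `<=` S.
  move=> c [n _ /=]; rewrite in_cons => /orP[/eqP->//|/mapP[a _ ->]].
  exact: retract_toS.
exists C; split=> //; split.
  by apply: bigcup_countable => // n _; apply/finite_set_countable/finite_seq.
split=> [c /CS/Ss.1 //|z zub].
have xz n : finsup L S s0 (alpha n) <=: z.
  apply: finsup_least => [|a a_in]; apply: zub; exists n => //=; rewrite in_cons ?eqxx //.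
  by rewrite map_f ?orbT.
suff /(vle_add s0) : s - s0 <=: z - s0 by rewrite !subrK.
apply: uoconv_bounded_le xuo _ => n /=; [exact/vsubr_ge0/finsup_ge_base| |exact/vle_add].
by apply/vle_add/(is_sup_finsup Ss0 Ss).1; exists (alpha n).
Qed.

End CountableSup.

Theorem theorem5p6 (R : realType) (E : topologicalLmodType R)
  (L : vector_lattice E) (HArch : archimedean_vl L)
  (Hhaus : hausdorff_space E) (Hol : o_lebesgue L) :
  let P1 := carrier L = [set: E] in
  let P2 := countable_sup_property L in
  let P3 := forall (I : Type) (D : dirset I) (x : I -> E) (l : E),
      tconv D x l ->
      exists alpha : nat -> I, embedded_indices D alpha /\ uoconv L natD (x \o alpha) l in
  let P4 := forall (I : Type) (D : dirset I) (x : I -> E) (l : E),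
      increasing_pos_net L D x -> tconv D x l ->
      exists alpha : nat -> I, embedded_indices D alpha /\ uoconv L natD (x \o alpha) l in
  [/\ P1 <-> P2, P2 <-> P3 & P3 <-> P4].
Proof.
move=> P1 P2 P3 P4.
have h13 : P1 -> P3 := fun full I D x l => embedded_uoconv_of_carrier_full HArch Hol full.
have h34 : P3 -> P4 := fun h3 I D x l _ => h3 I D x l.
have h42 : P4 -> P2 := countable_sup_of_embedded_uoconv Hol.
have h21 : P2 -> P1 := carrier_full_of_countable_sup HArch Hol Hhaus.
by split; split; auto.
Qed.
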